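(* For every $n\ge 1$, \[ |\mathrm{End}(P_n)| = \begin{cases} (n+1)2^{n-1} - (2n-1)\binom{n-1}{(n-1)/2} & \text{if } n \text{ is odd},\\[2pt] (n+1)2^{n-1} - n\binom{n}{n/2} & \text{if } n \text{ is even}.\end{cases} \]
   Context: For a positive integer $n$, $P_n$ denotes the path with vertex set $[n]=\{1,\dots,n\}$ in which $i$ and $j$ are adjacent iff $|i-j|=1$. $\mathrm{End}(P_n)$ is the set of endomorphisms of $P_n$, i.e. maps $f:[n]\to[n]$ with $|f(i)-f(i+1)|=1$ for all $1\le i\le n-1$. *)

From mathcomp Require Import all_boot all_order all_algebra.
Set Implicit Arguments. Unset Strict Implicit. Unset Printing Implicit Defensive.

(* Vertex i of P_n (1 <= i <= n) is represented by the ordinal i-1 : 'I_n.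
   Adjacency in P_n: |i - j| = 1. *)
Definition path_adj (n : nat) (i j : 'I_n) : bool :=
  (i.+1 == j :> nat) || (j.+1 == i :> nat).

Definition is_endo (n : nat) (f : {ffun 'I_n -> 'I_n}) : bool :=
  [forall i : 'I_n, forall j : 'I_n, (i.+1 == j :> nat) ==> path_adj (f i) (f j)].

Definition End_path (n : nat) : {set {ffun 'I_n -> 'I_n}} := [set f | is_endo f].

From mathcomp Require Import all_boot all_order all_algebra zify ring lra.
Import Order.TTheory GRing.Theory Num.Theory.

(* An endomorphism f of P_(L+1) is the same thing as a walk of L steps in P_(L+1)
   (the sequence f 1, ..., f (L+1)), so |End(P_(L+1))| is the sum over the start
   vertex x of the number of L-step walks from x that stay in the strip [0, L+1).
   Since a walk of L steps cannot touch both -1 and L+1, inclusion-exclusion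
   (a reflection argument) expresses the strip count through walks on the
   half-line [0, oo): walks(x) = G_L(x) + G_L(L - x) - 2^L, where G_L(s) counts
   the L-step walks from s that never go below 0.  Summing over x gives
   |End(P_(L+1))| = 2 S_L - (L+1) 2^L with S_L = \sum_(x <= L) G_L(x).

   G_L(s) is a window sum of binomial coefficients \sum_k C(L,k) over
   L - s - 1 <= 2k <= L + s (Pascal's rule), so G_L(0) = C(L, L/2).  Shifting the
   start point yields S_(L+1) = 2 S_L + 2^(L+1) - C(L, L/2), whose solution is
   2 S_L = (2L+3) 2^L - c_L with an explicit central binomial term c_L; this is
   the announced formula. *)

Lemma card_tuple_cons (T : finType) (k : nat) (P : seq T -> bool) :
  #|[set t : k.+1.-tuple T | P t]| =
  \sum_(x : T) #|[set t : k.-tuple T | P (x :: t)]|.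
Proof.
rewrite -sum1_card.
rewrite (reindex (fun p : T * k.-tuple T => [tuple of p.1 :: p.2])) /=; last first.
  exists (fun t : k.+1.-tuple T => (thead t, [tuple of behead t])).
    by move=> [x t] _ /=; congr pair; apply: val_inj.
  by move=> t _; apply: val_inj => /=; case: t => [[|x s] //].
symmetry; under eq_bigr do rewrite -sum1_card.
by rewrite pair_big_dep /=; apply: eq_bigl => -[x t]; rewrite !inE.
Qed.

Lemma is_endo_sorted (n : nat) (f : {ffun 'I_n -> 'I_n}) :
  is_endo f = sorted (@path_adj n) (tuple_of_finfun f).
Proof.
case: n f => [|n] f.
  have -> : is_endo f by apply/forallP => -[].
  by rewrite /tuple_of_finfun /= enum_ord0.
have size_f : size (tuple_of_finfun f) = n.+1 by rewrite size_tuple.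
apply/forallP/(sortedP ord0) => [endo_f i | adj_f i].
- rewrite size_f => lt_in; have lt_i : i < n.+1 by apply: ltnW.
  have := endo_f (Ordinal lt_i) => /forallP /(_ (Ordinal lt_in)).
  by rewrite eqxx /tuple_of_finfun -(nth_mktuple f ord0 (Ordinal lt_i))
     -(nth_mktuple f ord0 (Ordinal lt_in)).
- apply/forallP => j; apply/implyP => /eqP ij.
  have := adj_f i; rewrite size_f ij ltn_ord => /(_ isT).
  by rewrite /tuple_of_finfun !(nth_mktuple f).
Qed.

Definition walks {m : nat} (k : nat) (x : 'I_m) : nat :=
  #|[set t : k.-tuple 'I_m | path (@path_adj m) x t]|.

Lemma card_End_path_walks (n : nat) :
  #|End_path n.+1| = \sum_(x : 'I_n.+1) walks n x.
Proof.
rewrite -[RHS](card_tuple_cons _ _ (sorted (@path_adj n.+1))) -!sum1_card.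
rewrite (reindex (@finfun_of_tuple _ n.+1)) /=.
  by apply: eq_bigl => t; rewrite !inE is_endo_sorted finfun_of_tupleK.
by exists (@tuple_of_finfun _ n.+1) => f _;
  [apply: finfun_of_tupleK | apply: tuple_of_finfunK].
Qed.

Lemma walks0 (m : nat) (x : 'I_m) : walks 0 x = 1%N.
Proof.
rewrite /walks (_ : [set t | _] = setT) ?cardsT ?card_tuple //.
by apply/setP => t; rewrite !inE tuple0.
Qed.

Lemma walksS (m k : nat) (x : 'I_m) :
  walks k.+1 x = \sum_(y : 'I_m) (path_adj x y * walks k y)%N.
Proof.
rewrite /walks card_tuple_cons; apply: eq_bigr => y _ /=.
case: (path_adj x y); first by rewrite mul1n.
by rewrite mul0n -(cards0 (k.-tuple 'I_m)); congr #|_|; apply/setP => t; rewrite !inE.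
Qed.

Local Open Scope ring_scope.

(* Lattice walks on the integers: the strip [0, m) models the path 'I_m. *)
Definition in_strip (m : nat) (s : int) : bool := (0 <= s) && (s < m%:Z).

Lemma sum_indicator (m : nat) (F : int -> int) (a : int) :
  (forall s, ~~ in_strip m s -> F s = 0) ->
  \sum_(y < m) ((y%:Z == a)%:R * F y) = F a.
Proof.
move=> F_out; have [a_in | a_out] := boolP (in_strip m a); last first.
  rewrite F_out // big1 // => y _; case: eqP => [ya|]; last by rewrite mul0r.
  by move: a_out; rewrite -ya /in_strip ltz_nat ltn_ord.
case: a a_in => [k|k] //; rewrite /in_strip ltz_nat => /andP[_ lt_km].
rewrite (bigD1 (Ordinal lt_km)) //= eqxx mul1r big1 ?addr0 // => y ne_yk.
by rewrite eqz_nat -[k]/(nat_of_ord (Ordinal lt_km)) (inj_eq val_inj) (negPf ne_yk) mul0r.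
Qed.

Lemma path_adj_int (m : nat) (x y : 'I_m) :
  (path_adj x y)%:R = (y%:Z == x%:Z - 1)%:R + (y%:Z == x%:Z + 1)%:R :> int.
Proof.
rewrite /path_adj; move: (nat_of_ord x) (nat_of_ord y) => a b.
have -> : (b%:Z == a%:Z - 1) = (b.+1 == a) by apply/eqP/eqP; lia.
have -> : (b%:Z == a%:Z + 1) = (a.+1 == b) by apply/eqP/eqP; lia.
by do 2 case: eqP => ? /=; lia.
Qed.

Fixpoint strip_walks (m L : nat) (s : int) : int :=
  if in_strip m s then
    (if L is L'.+1 then strip_walks m L' (s - 1) + strip_walks m L' (s + 1) else 1)
  else 0.

Lemma strip_walks_out (m L : nat) (s : int) :
  ~~ in_strip m s -> strip_walks m L s = 0.
Proof. by case: L => [|L] /= /negPf ->. Qed.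

Lemma walks_strip (m k : nat) (x : 'I_m) : (walks k x)%:Z = strip_walks m k x.
Proof.
have x_in : in_strip m x by rewrite /in_strip ltz_nat ltn_ord.
elim: k x x_in => [|k IH] x x_in; first by rewrite walks0 /= x_in.
rewrite walksS /= x_in -natz natr_sum.
have step (y : 'I_m) : ((path_adj x y * walks k y)%N%:R : int) =
    (y%:Z == x%:Z - 1)%:R * strip_walks m k y + (y%:Z == x%:Z + 1)%:R * strip_walks m k y.
  rewrite natrM [X in _ * X]natz IH; first by rewrite path_adj_int mulrDl.
  by rewrite /in_strip ltz_nat ltn_ord.
rewrite (eq_bigr _ (fun y _ => step y)) big_split /= !sum_indicator //.
all: exact: strip_walks_out.
Qed.

Fixpoint halfline_walks (L : nat) (s : int) : int :=
  if s < 0 then 0 else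
    if L is L'.+1 then halfline_walks L' (s - 1) + halfline_walks L' (s + 1) else 1.

Lemma halfline_walks_neg (L : nat) (s : int) : s < 0 -> halfline_walks L s = 0.
Proof. by case: L => [|L] /= ->. Qed.

Lemma halfline_walksS (L : nat) (s : int) : 0 <= s ->
  halfline_walks L.+1 s = halfline_walks L (s - 1) + halfline_walks L (s + 1).
Proof. by move=> s_ge0 /=; rewrite ltNge s_ge0. Qed.

Lemma halfline_walks_far (L : nat) (s : int) : L%:Z <= s -> halfline_walks L s = 2 ^+ L.
Proof.
elim: L s => [|L IH] s le_Ls; first by rewrite /= ltNge le_Ls.
rewrite halfline_walksS; last by lia.
by rewrite !IH ?exprS; lia.
Qed.

(* Inclusion-exclusion for the two walls of the strip: a walk of L <= m steps
   cannot reach both -1 and m, and walks avoiding m are, after the reflection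
   s |-> m - 1 - s, walks avoiding -1. *)
Lemma strip_reflection (m L : nat) (s : int) : (L <= m)%N -> -1 <= s <= m%:Z ->
  strip_walks m L s = halfline_walks L s + halfline_walks L (m%:Z - 1 - s) - 2 ^+ L.
Proof.
elim: L s => [|L IH] s le_Lm /andP[s_ge s_le].
  by rewrite /= /in_strip expr0; do 3 case: ifP => ?; lia.
have [s_in | s_out] := boolP (in_strip m s); last first.
  rewrite strip_walks_out //.
  have [-> | ->] : s = -1 \/ s = m%:Z by move: s_out; rewrite /in_strip; lia.
    by rewrite halfline_walks_neg // halfline_walks_far ?add0r ?subrr //; lia.
  by rewrite (halfline_walks_neg _ (_ - _)) ?halfline_walks_far ?addr0 ?subrr //; lia.
move: (s_in) => /andP[s_ge0 s_lt].
have -> : strip_walks m L.+1 s = strip_walks m L (s - 1) + strip_walks m L (s + 1).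
  by rewrite /= s_in.
rewrite !halfline_walksS //; last by lia.
rewrite !IH; try (apply/andP; split); try lia.
have -> : m%:Z - 1 - (s - 1) = m%:Z - 1 - s + 1 by ring.
have -> : m%:Z - 1 - (s + 1) = m%:Z - 1 - s - 1 by ring.
by rewrite exprS; lia.
Qed.

Definition in_window (L k : nat) (s : int) : bool :=
  (L%:Z <= (2 * k)%:Z + s + 1) && ((2 * k)%:Z <= L%:Z + s).

Lemma window_neg (L k : nat) (s : int) : s < 0 -> in_window L k s = false.
Proof. by move=> s_neg; rewrite /in_window; apply/negbTE/negP => /andP[]; lia. Qed.

(* The window is compatible with Pascal's rule: this is the identity behind
   the first-step recursion of halfline_walks. *)
Lemma window_step (L k : nat) (s : int) : 0 <= s ->
  (in_window L.+1 k s)%:R + (in_window L.+1 k.+1 s)%:R =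
  (in_window L k (s - 1))%:R + (in_window L k (s + 1))%:R :> int.
Proof.
move=> s_ge0; rewrite /in_window.
repeat match goal with |- context [(?a <= ?b)%R] =>
  let h := fresh in destruct (a <= b)%R eqn:h end; rewrite /= ?addr0 ?add0r //; lia.
Qed.

Lemma binomial_pascal_sum (L : nat) (f : nat -> int) :
  \sum_(k < L.+2) 'C(L.+1, k)%:R * f k = \sum_(k < L.+1) 'C(L, k)%:R * (f k + f k.+1).
Proof.
rewrite big_ord_recl /= bin0 mul1r.
under eq_bigr do rewrite binS natrD mulrDl.
rewrite big_split /=.
under [RHS]eq_bigr do rewrite mulrDr.
rewrite [RHS]big_split /= addrA; congr (_ + _).
rewrite [RHS]big_ord_recl bin0 mul1r; congr (_ + _).
by rewrite big_ord_recr /= bin_small // mul0r addr0.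
Qed.

Lemma halfline_binomial (L : nat) (s : int) :
  halfline_walks L s = \sum_(k < L.+1) 'C(L, k)%:R * (in_window L k s)%:R.
Proof.
elim: L s => [|L IH] s.
  rewrite big_ord1 bin0 mul1r.
  have [s_neg | s_ge0] := ltrP s 0; first by rewrite window_neg // halfline_walks_neg.
  by rewrite /= ltNge s_ge0 /in_window (_ : _ && _) //; lia.
have [s_neg | s_ge0] := ltrP s 0.
  by rewrite halfline_walks_neg // big1 // => k _; rewrite window_neg ?mulr0.
rewrite halfline_walksS // !IH -big_split /=.
rewrite (binomial_pascal_sum L (fun k => (in_window L.+1 k s)%:R)).
by apply: eq_bigr => k _; rewrite -mulrDr window_step.
Qed.

Lemma halfline_walks_origin (L : nat) : halfline_walks L 0 = 'C(L, L./2)%:R.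
Proof.
have lt_half : (L./2 < L.+1)%N by have := odd_double_half L; lia.
rewrite halfline_binomial (bigD1 (Ordinal lt_half)) //= big1 ?addr0.
  suff -> : in_window L L./2 0 by rewrite mulr1.
  by rewrite /in_window; have := odd_double_half L; case: odd => /=; lia.
move=> k ne_k; rewrite (_ : in_window L k 0 = false) ?mulr0 //.
apply/negbTE/negP; rewrite /in_window => /andP[lo hi]; move/eqP: ne_k; apply.
by apply: val_inj => /=; have := odd_double_half L; case: odd => /=; lia.
Qed.

Definition halfline_sum (L : nat) : int := \sum_(x < L.+1) halfline_walks L x.

(* Recursion for S_L: shifting the start points, only the walks from the wall
   and from the two far points L+1, L+2 do not cancel. *)
Lemma halfline_sumS (L : nat) :
  halfline_sum L.+1 = 2 * halfline_sum L + 2 * 2 ^+ L - halfline_walks L 0.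
Proof.
rewrite /halfline_sum.
under eq_bigr do rewrite halfline_walksS //.
rewrite big_split /=.
have shift_down : \sum_(x < L.+2) halfline_walks L (x%:Z - 1) =
    \sum_(x < L.+1) halfline_walks L x.
  rewrite big_ord_recl /= halfline_walks_neg // add0r.
  by apply: eq_bigr => x _; congr halfline_walks; rewrite /bump /=; lia.
have shift_up : \sum_(x < L.+3) halfline_walks L x =
    halfline_walks L 0 + \sum_(x < L.+2) halfline_walks L (x%:Z + 1).
  rewrite big_ord_recl /=; congr (_ + _); apply: eq_bigr => x _.
  by congr halfline_walks; rewrite /bump /=; lia.
have far_terms : \sum_(x < L.+3) halfline_walks L x =
    \sum_(x < L.+1) halfline_walks L x + 2 ^+ L + 2 ^+ L.
  by rewrite big_ord_recr big_ord_recr /= !halfline_walks_far //; lia.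
rewrite shift_down; move: shift_up; rewrite far_terms.
set below := \sum_(x < L.+1) _; set above := \sum_(x < L.+2) _.
by move=> shift_up; lia.
Qed.

(* The correction term of the theorem for n = L + 1. *)
Definition central_term (L : nat) : nat :=
  if odd L then (L.+1 * 'C(L.+1, (L.+1)./2))%N else ((2 * L).+1 * 'C(L, L./2))%N.

Lemma binomial_central_facts (m : nat) :
  'C(m.*2.+2, m.+1) = (2 * 'C(m.*2.+1, m))%N /\
  (m.+1 * 'C(m.*2.+1, m) = m.*2.+1 * 'C(m.*2, m))%N.
Proof.
have sym : 'C(m.*2.+1, m.+1) = 'C(m.*2.+1, m).
  by rewrite -(bin_sub (_ : m <= m.*2.+1)%N); [congr binomial|]; lia.
split; first by rewrite binS sym; lia.
by have := mul_bin_diag m.*2.+1 m; rewrite /= sym => ->; lia.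
Qed.

Lemma central_termS (L : nat) :
  central_term L.+1 = (2 * central_term L + 2 * 'C(L, L./2))%N.
Proof.
have [m [-> | ->]] : exists m, L = m.*2 \/ L = m.*2.+1.
  by exists L./2; have := odd_double_half L; case: odd => /=; lia.
all: have [bin_even bin_odd] := binomial_central_facts m.
all: rewrite /central_term /= odd_double /= ?uphalf_double doubleK bin_even.
all: by rewrite -!muln2 in bin_even bin_odd *; nia.
Qed.

Lemma halfline_sum_closed (L : nat) :
  2 * halfline_sum L + (central_term L)%:Z = (2 * L%:Z + 3) * 2 ^+ L.
Proof.
elim: L => [|L IH]; first by rewrite /halfline_sum big_ord1.
rewrite halfline_sumS halfline_walks_origin central_termS exprS -natz.
by move: IH; set s := halfline_sum L; set p := 2 ^+ L; nia.
Qed.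

(* Summing the reflection formula over the start vertex. *)
Lemma card_End_path_halfline (L : nat) :
  #|End_path L.+1|%:Z = 2 * halfline_sum L - L.+1%:Z * 2 ^+ L.
Proof.
rewrite card_End_path_walks -natz natr_sum.
have reflect_x (x : 'I_L.+1) : (walks L x)%:R =
    halfline_walks L x + halfline_walks L (L%:Z - x%:Z) - 2 ^+ L :> int.
  rewrite natz walks_strip strip_reflection //; last by have := ltn_ord x; lia.
  by congr (_ + halfline_walks L _ - _); lia.
rewrite (eq_bigr _ (fun x _ => reflect_x x)).
rewrite sumrB big_split /= sumr_const card_ord.
have -> : \sum_(x < L.+1) halfline_walks L (L%:Z - x%:Z) = halfline_sum L.
  rewrite /halfline_sum (reindex_inj rev_ord_inj) /=; apply: eq_bigr => x _.
  by congr halfline_walks; rewrite subSS; have := ltn_ord x; lia.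
by rewrite -/(halfline_sum L) -mulr_natl; lia.
Qed.

Lemma card_End_path_closed (L : nat) :
  #|End_path L.+1|%:Z = (L.+2 * 2 ^ L)%N%:Z - (central_term L)%:Z.
Proof.
have closed := halfline_sum_closed L.
rewrite card_End_path_halfline PoszM -[Posz (2 ^ L)]natz natrX.
by move: closed; set p := 2 ^+ L; set s := halfline_sum L; nia.
Qed.

Theorem mainTheorem7 (n : nat) (hn : (1 <= n)%N) :
  (#|End_path n|%:Z =
   if odd n then
     ((n + 1) * 2 ^ (n - 1))%N%:Z - ((2 * n - 1) * 'C(n - 1, (n - 1)./2))%N%:Z
   else
     ((n + 1) * 2 ^ (n - 1))%N%:Z - (n * 'C(n, n./2))%N%:Z).
Proof.
case: n hn => [//|L] _.
rewrite card_End_path_closed /central_term /= subSS subn0 addn1.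
case: (odd L) => //=.
by rewrite (_ : (2 * L.+1 - 1)%N = (2 * L).+1) //; lia.
Qed.
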